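(* Let $v\ge1$. If there exists an OA$(2,4,v)$, then there exists a $(2,3,v)$-AONT.
   Context: An orthogonal array OA$(t,k,v)$ over an alphabet $X$ with $|X|=v$ is a $v^t\times k$ array with entries in $X$ such that for every set of $t$ columns, every $t$-tuple of elements of $X$ occurs exactly once as a row of the subarray formed by these columns. Let $0\le t\le s$. A $(t,s,v)$-AONT is a bijection $\phi:X^s\to X^s$ such that for every $I\subseteq\{1,\dots,s\}$ with $|I|=t$ and every $J\subseteq\{1,\dots,s\}$ with $|J|=s-t$, the map $x\mapsto\big((x_i)_{i\in I},(\phi(x)_j)_{j\in J}\big)$ is a bijection $X^s\to X^t\times X^{s-t}$. *)

From mathcomp Require Import all_boot.
Set Implicit Arguments. Unset Strict Implicit. Unset Printing Implicit Defensive.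

(* An OA(t,k,v) over alphabet X (|X| = v): a v^t x k array A, rows indexed by
   'I_(v^t), such that for every set C of t columns and every t-tuple of
   symbols (given as a function on the columns, only its values on C matter)
   there is exactly one row agreeing with it on C. *)
Definition is_OA (X : finType) (t k : nat) (A : 'I_(#|X| ^ t) -> 'I_k -> X) : Prop :=
  forall (C : {set 'I_k}), #|C| = t ->
  forall (f : 'I_k -> X),
    exists! r : 'I_(#|X| ^ t), forall c, c \in C -> A r c = f c.

(* A (t,s,v)-AONT over X: a bijection phi : X^s -> X^s such that for all
   I, J with |I| = t, |J| = s - t, x |-> (x|_I, phi(x)|_J) is a bijection
   X^s -> X^t x X^(s-t): every prescribed pair of values (a on I, b on J)
   is attained by exactly one x. *)
Definition is_AONT (X : finType) (t s : nat)
    (phi : {ffun 'I_s -> X} -> {ffun 'I_s -> X}) : Prop :=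
  bijective phi /\
  forall (I J : {set 'I_s}), #|I| = t -> #|J| = s - t ->
  forall (a b : 'I_s -> X),
    exists! x : {ffun 'I_s -> X},
      (forall i, i \in I -> x i = a i) /\ (forall j, j \in J -> phi x j = b j).

From mathcomp Require Import all_boot.
Set Implicit Arguments. Unset Strict Implicit. Unset Printing Implicit Defensive.

(* Columns 2 and 3 of an OA(2,4,v), read as functions of columns 0 and 1, form
   two orthogonal Latin squares L and M. From them,
     (x0, x1, x2) |-> (L x1 (L x0 x2), M x1 (L x0 x2), L x1 (M x0 x2))
   is a (2,3,v)-AONT. With two inputs fixed, every output is a composite of
   Latin-square rows and columns, hence a bijection of the free input. The map
   itself is injective: by orthogonality the first two outputs give x1 and
   L x0 x2, the third then gives M x0 x2, and orthogonality again gives x0, x2. *)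

Definition latin_square (X : Type) (L : X -> X -> X) : Prop :=
  (forall b, injective (L ^~ b)) /\ (forall a, injective (L a)).

Definition orthogonal (X : Type) (L M : X -> X -> X) : Prop :=
  forall a b a' b', L a b = L a' b' -> M a b = M a' b' -> a = a' /\ b = b'.

Section OrthogonalArray.

Variables (X : finType) (k : nat) (A : 'I_(#|X| ^ 2) -> 'I_k -> X).
Hypothesis A_OA : is_OA A.

Lemma OA_row_uniq c c' r r' :
  c != c' -> A r c = A r' c -> A r c' = A r' c' -> r = r'.
Proof.
move=> neq_cc' eq_c eq_c'.
have card_cc' : #|[set c; c']| = 2 by rewrite cards2 neq_cc'.
have [r0 [_ uniq_r0]] := A_OA card_cc' (A r).
rewrite -(uniq_r0 r); last by move=> d /set2P [->|->].
by apply: uniq_r0 => d /set2P [->|->].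
Qed.

Lemma OA_row_exists c c' a b : c != c' -> exists r, A r c = a /\ A r c' = b.
Proof.
move=> neq_cc'.
have card_cc' : #|[set c; c']| = 2 by rewrite cards2 neq_cc'.
have [r [Ar _]] := A_OA card_cc' (fun d => if d == c then a else b).
by exists r; rewrite !Ar ?set21 ?set22 // eqxx eq_sym (negbTE neq_cc').
Qed.

Variables p q : 'I_k.
Hypothesis neq_pq : p != q.

Definition OA_square (c : 'I_k) (a b : X) : X :=
  if [pick r | (A r p == a) && (A r q == b)] is Some r then A r c else a.

Lemma OA_squareE c r : OA_square c (A r p) (A r q) = A r c.
Proof.
rewrite /OA_square; case: pickP => [r' /andP [/eqP eq_p /eqP eq_q] | no_row].
  by rewrite (OA_row_uniq neq_pq eq_p eq_q).
by have := no_row r; rewrite !eqxx.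
Qed.

Lemma OA_square_latin c : c != p -> c != q -> latin_square (OA_square c).
Proof.
move=> neq_cp neq_cq; split=> [b a a' | a b b'].
- have [r [<- <-]] := OA_row_exists a b neq_pq.
  have [r' [<- eq_q]] := OA_row_exists a' (A r q) neq_pq.
  rewrite -{2}eq_q !OA_squareE => eq_c.
  by rewrite (OA_row_uniq neq_cq eq_c (esym eq_q)).
- have [r [<- <-]] := OA_row_exists a b neq_pq.
  have [r' [eq_p <-]] := OA_row_exists (A r p) b' neq_pq.
  rewrite -{2}eq_p !OA_squareE => eq_c.
  by rewrite (OA_row_uniq neq_cp eq_c (esym eq_p)).
Qed.

Lemma OA_square_orthogonal c c' :
  c != c' -> orthogonal (OA_square c) (OA_square c').
Proof.
move=> neq_cc' a b a' b'.
have [r [<- <-]] := OA_row_exists a b neq_pq.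
have [r' [<- <-]] := OA_row_exists a' b' neq_pq.
by rewrite !OA_squareE => eq_c eq_c'; rewrite (OA_row_uniq neq_cc' eq_c eq_c').
Qed.

End OrthogonalArray.

Definition ffun_set (I : finType) (X : Type) (x : {ffun I -> X}) (i : I) (z : X) :
    {ffun I -> X} :=
  [ffun j => if j == i then z else x j].

(* For t = s - 1 the AONT condition only ever leaves one input free and
   inspects one output. *)
Lemma is_AONT_coordinatewise (X : finType) (s : nat)
    (phi : {ffun 'I_s.+1 -> X} -> {ffun 'I_s.+1 -> X}) :
  injective phi -> (forall x i j, injective (fun z => phi (ffun_set x i z) j)) ->
  is_AONT s phi.
Proof.
move=> phi_inj coord_inj; split; first exact: injF_bij.
move=> I J cardI cardJ a b.
have /eqP/cards1P [i defIC] : #|~: I| = 1.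
  by rewrite cardsCs setCK card_ord cardI subSnn.
have /eqP/cards1P [j ->] : #|J| = 1 by rewrite cardJ subSnn.
have inI i' : (i' \in I) = (i' != i) by rewrite -[I]setCK defIC !inE.
pose a' := [ffun i' => a i'].
have [g gK Kg] := injF_bij (coord_inj a' i j).
exists (ffun_set a' i (g (b j))); split.
  split=> [i' | j' /set1P ->]; last by rewrite Kg.
  by rewrite inI !ffunE => /negbTE ->.
move=> y [yI yJ].
have def_y : y = ffun_set a' i (y i).
  apply/ffunP => i'; rewrite !ffunE.
  by case: eqVneq => [-> | neq_i'i] //; rewrite yI ?inI.
by rewrite -(yJ j (set11 j)) [in phi y]def_y gK.
Qed.

Section MOLSConstruction.

Variables (X : finType) (L M : X -> X -> X).
Hypotheses (L_latin : latin_square L) (M_latin : latin_square M).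
Hypothesis LM_orthogonal : orthogonal L M.

Local Notation i0 := (@Ordinal 3 0 isT).
Local Notation i1 := (@Ordinal 3 1 isT).
Local Notation i2 := (@Ordinal 3 2 isT).

Definition mols_aont (x : {ffun 'I_3 -> X}) : {ffun 'I_3 -> X} :=
  [ffun i : 'I_3 => match val i with
    | 0 => L (x i1) (L (x i0) (x i2))
    | 1 => M (x i1) (L (x i0) (x i2))
    | _ => L (x i1) (M (x i0) (x i2))
    end].

Lemma mols_aont_inj : injective mols_aont.
Proof.
move=> x y /ffunP eq_xy.
have [_ L_injr] := L_latin.
have := eq_xy i0; have := eq_xy i1; have := eq_xy i2; rewrite !ffunE /=.
move=> eq2 eq1 eq0.
have [eq_x1 eq_Lx] := LM_orthogonal eq0 eq1.
rewrite eq_x1 in eq2; move/L_injr: eq2 => eq_Mx.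
have [eq_x0 eq_x2] := LM_orthogonal eq_Lx eq_Mx.
by apply/ffunP => -[[|[|[|//]]] lt_i3]; rewrite (bool_irrelevance lt_i3 isT).
Qed.

Lemma mols_aont_coord_inj x i j :
  injective (fun z => mols_aont (ffun_set x i z) j).
Proof.
have [L_injl L_injr] := L_latin; have [M_injl M_injr] := M_latin.
move=> z z'; rewrite !ffunE.
case: j => [[|[|[|//]]] ?]; case: i => [[|[|[|//]]] ?]; rewrite /= ?ffunE /=.
all: by move=> eq_z; repeat first
  [ move/L_injl: eq_z => eq_z | move/L_injr: eq_z => eq_z
  | move/M_injl: eq_z => eq_z | move/M_injr: eq_z => eq_z ].
Qed.

Lemma mols_aont_is_AONT : is_AONT 2 mols_aont.
Proof.
exact: is_AONT_coordinatewise mols_aont_inj mols_aont_coord_inj.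
Qed.

End MOLSConstruction.

Theorem theorem3p7 (v : nat) (X : finType) :
  1 <= v -> #|X| = v ->
  (exists A : 'I_(#|X| ^ 2) -> 'I_4 -> X, is_OA A) ->
  exists phi : {ffun 'I_3 -> X} -> {ffun 'I_3 -> X}, is_AONT 2 phi.
Proof.
move=> _ _ [A A_OA].
pose col n (lt_n4 : n < 4) : 'I_4 := Ordinal lt_n4.
pose square n lt_n4 := OA_square A (col 0 isT) (col 1 isT) (col n lt_n4).
exists (mols_aont (square 2 isT) (square 3 isT)).
by apply: mols_aont_is_AONT;
  [apply: OA_square_latin | apply: OA_square_latin | apply: OA_square_orthogonal].
Qed.
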